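(* Let $\mathbf u$ be an infinite word over a finite alphabet whose language is closed under reversal. Suppose that both the defect $D(\mathbf u)$ and the sum $\sum_{n=0}^{+\infty}T_{\mathbf u}(n)$ are finite. Then $$2D(\mathbf u)=\sum_{n=0}^{+\infty}T_{\mathbf u}(n).$$
   Context: For a finite word $w=w_0\cdots w_{n-1}$ its reversal is $\overline{w}=w_{n-1}\cdots w_0$; $w$ is a palindrome if $w=\overline{w}$ (the empty word is a palindrome). The language $\mathcal L(\mathbf u)$ is the set of all finite factors of $\mathbf u$, and $\mathcal L_n(\mathbf u)$ those of length $n$; the language is closed under reversal if $w\in\mathcal L(\mathbf u)$ implies $\overline w\in\mathcal L(\mathbf u)$. The factor complexity is $\mathcal C_{\mathbf u}(n)=\#\mathcal L_n(\mathbf u)$ and the palindromic complexity $\mathcal P_{\mathbf u}(n)$ is the number of palindromes in $\mathcal L_n(\mathbf u)$. Define $T_{\mathbf u}(n)=\mathcal C_{\mathbf u}(n+1)-\mathcal C_{\mathbf u}(n)+2-\mathcal P_{\mathbf u}(n+1)-\mathcal P_{\mathbf u}(n)$. The defect of a finite word $w$ is $D(w)=|w|+1-(\text{number of distinct palindromic factors of } w, \text{ including the empty word})$. The defect of an infinite word is $D(\mathbf u)=\sup\{D(w): w \text{ a prefix of } \mathbf u\}$ (possibly $+\infty$). *)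

From mathcomp Require Import all_boot all_order all_algebra.
From mathcomp Require Import boolp.
Set Implicit Arguments. Unset Strict Implicit. Unset Printing Implicit Defensive.
Import Order.TTheory GRing.Theory Num.Theory.

Definition is_factor (A : finType) (u : nat -> A) (w : seq A) : Prop :=
  exists i : nat, w = [seq u (i + k) | k <- iota 0 (size w)].

Definition closed_under_reversal (A : finType) (u : nat -> A) : Prop :=
  forall w : seq A, is_factor u w -> is_factor u (rev w).

Definition palindrome (A : eqType) (w : seq A) : bool := w == rev w.

Definition factor_complexity (A : finType) (u : nat -> A) (n : nat) : nat :=
  #|[set t : n.-tuple A | `[< is_factor u (tval t) >]]|.

Definition pal_complexity (A : finType) (u : nat -> A) (n : nat) : nat :=
  #|[set t : n.-tuple A | `[< is_factor u (tval t) >] && palindrome (tval t)]|.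

Definition T_u (A : finType) (u : nat -> A) (n : nat) : int :=
  (factor_complexity u n.+1)%:Z - (factor_complexity u n)%:Z + 2
  - (pal_complexity u n.+1)%:Z - (pal_complexity u n)%:Z.

Definition factors_of (A : eqType) (w : seq A) : seq (seq A) :=
  [seq take j (drop i w) | i <- iota 0 (size w).+1, j <- iota 0 (size w - i).+1].

(* number of distinct palindromic factors of w, including the empty word *)
Definition num_pal_factors (A : eqType) (w : seq A) : nat :=
  size (undup [seq v <- factors_of w | palindrome v]).

Definition defect (A : eqType) (w : seq A) : int :=
  (size w)%:Z + 1 - (num_pal_factors w)%:Z.

Definition prefix (A : finType) (u : nat -> A) (n : nat) : seq A :=
  [seq u k | k <- iota 0 n].

Definition defect_is (A : finType) (u : nat -> A) (d : int) : Prop :=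
  (forall n, defect (prefix u n) <= d)%R /\
  (forall e : int, (forall n, defect (prefix u n) <= e)%R -> (d <= e)%R).

(* the series sum_{n>=0} T_u(n) converges (is finite) with value S:
   for an integer-valued series this means the partial sums are eventually S *)
Definition T_sum_is (A : finType) (u : nat -> A) (S : int) : Prop :=
  exists N : nat, forall m : nat, (N <= m)%N ->
    (\sum_(n < m) T_u u n)%R = S.

From Pilot Require Import Defs.
From mathcomp Require Import all_boot all_order all_algebra.
From mathcomp Require Import zify ring boolp.
Import Order.TTheory GRing.Theory Num.Theory.

Set Implicit Arguments. Unset Strict Implicit. Unset Printing Implicit Defensive.

(* Appending a letter [a] to a finite word [w] creates at most one new palindromic
   factor: any palindromic suffix of [w a] shorter than the longest one is mirrored
   inside it, hence already occurs in [w].  So the defect of the prefixes of [u] is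
   nondecreasing, and from some prefix on every letter creates exactly one new palindrome.
   For a finite word [w] put
     T_w(N) = S_w(N) + P_w(N) + 2N - 2 sum_(n <= N) P_w(n),
   where P_w(n) counts the palindromic factors of [w] of length [n] and S_w(N) the words
   of length [N] that occur in [w] up to reversal.  Since S_w(|w|) + P_w(|w|) = 2, we get
   T_w(|w|) = 2 D(w).  For N <= |w|, appending a letter whose new palindrome has length
   n0 adds [n0 < N] + [n0 <= N] to S_w(N), [n0 = N] to P_w(N) and [n0 <= N] to the sum,
   so T_w(N) does not change.  Finally, on a prefix of [u] past the stabilisation of the
   defect that contains every factor of length at most [N], closure under reversal turns
   T_w(N) into C(N) + P(N) + 2N - 2 sum_(n <= N) P(n), which telescopes to
   sum_(n < N) T(n). *)

Section Suffixes.
Variable A : eqType.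
Implicit Types (w p q s : seq A) (a : A).

Definition suffixn n s := drop (size s - n) s.

Lemma size_suffixn n s : n <= size s -> size (suffixn n s) = n.
Proof. by move=> le_n_s; rewrite size_drop; lia. Qed.

Lemma suffixn_suffix n s : suffix (suffixn n s) s.
Proof. exact: suffix_drop. Qed.

Lemma suffix_suffixnE p s : suffix p s = (p == suffixn (size p) s).
Proof. by rewrite suffixE eq_sym. Qed.

Lemma suffixn_suffixn m n s : m <= n -> suffixn m (suffixn n s) = suffixn m s.
Proof. by move=> le_mn; rewrite /suffixn drop_drop size_drop; congr drop; lia. Qed.

Lemma suffixn_leq m n s : m <= n -> suffix (suffixn m s) (suffixn n s).
Proof. by move=> le_mn; rewrite -(suffixn_suffixn _ le_mn) suffixn_suffix. Qed.

(* [rev q] is a proper prefix of the palindrome [p = rev p], so it avoids the last letter. *)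
Lemma pal_suffix_rcons_infix w a p q : palindrome p -> suffix p (rcons w a) ->
  suffix q p -> size q < size p -> infix (rev q) w.
Proof.
move=> /eqP p_pal /suffixP[x def_wa] /suffixP[y def_p] lt_qp.
have : p = rev q ++ rev y by rewrite {1}p_pal def_p rev_cat.
case/lastP: (rev y) (size_rev y) => [|z b] size_y def_p'.
  by move: lt_qp; rewrite def_p size_cat -size_y /=; lia.
move: def_wa; rewrite def_p' -!rcons_cat => /rcons_inj[-> _].
exact: infix_infix.
Qed.

Lemma infix_eq_size p s : size p = size s -> infix p s = (p == s).
Proof.
move=> eq_size; apply/idP/eqP => [/infixW/size_subseq_leqif[_] | ->]; last exact: infix_refl.
by rewrite eq_size eqxx => /esym/eqP.
Qed.

Lemma mem_factors_of v w : (v \in factors_of w) = infix v w.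
Proof.
apply/allpairsPdep/idP => [[i [j [_ _ ->]]]|/infixP[x [y ->]]].
  exact: infix_trans (infix_take _ _) (infix_drop _ _).
exists (size x), (size v); rewrite !mem_iota !size_cat drop_size_cat // take_size_cat //.
by split=> //; lia.
Qed.

End Suffixes.

Lemma sum_ord_eqn (k B : nat) : \sum_(n < B) (k == n : nat) = (k < B).
Proof.
have [lt_kB | le_Bk] := ltnP k B; last first.
  by apply: big1 => n _; case: eqP => // def_k; move: (ltn_ord n); rewrite -def_k; lia.
rewrite (bigD1 (Ordinal lt_kB)) //= eqxx big1 // => n /eqP ne_n_k.
by case: eqP => // def_k; case: ne_n_k; apply: val_inj.
Qed.

Section PalindromicFactors.
Variable A : finType.
Implicit Types (w : seq A) (a : A).

Definition pal_factors w n : {set n.-tuple A} :=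
  [set t : n.-tuple A | infix t w && palindrome t].

Definition sym_factors w n : {set n.-tuple A} :=
  [set t : n.-tuple A | infix t w || infix (rev t) w].

Lemma size_sum_count_size (L : seq (seq A)) B : all (fun v => size v < B) L ->
  size L = \sum_(n < B) count (fun v => size v == n) L.
Proof.
elim: L => [_|v L IHL /= /andP[lt_vB /IHL->]]; first by rewrite big1.
by rewrite big_split /= sum_ord_eqn lt_vB.
Qed.

Lemma count_pal_factors w n :
  count (fun v => size v == n) (undup [seq v <- factors_of w | palindrome v]) =
  #|pal_factors w n|.
Proof.
rewrite -size_filter cardE -(size_map val); apply/perm_size/uniq_perm.
- by rewrite filter_uniq ?undup_uniq.
- by rewrite (map_inj_uniq val_inj) enum_uniq.
move=> v; rewrite mem_filter mem_undup mem_filter mem_factors_of.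
apply/idP/mapP => [/andP[size_v /andP[v_pal v_w]] | [t]].
  by exists (Tuple size_v); rewrite // mem_enum inE v_w v_pal.
by rewrite mem_enum inE => /andP[t_w t_pal] ->; rewrite size_tuple eqxx t_w t_pal.
Qed.

Lemma num_pal_factors_sum w B : size w < B ->
  num_pal_factors w = \sum_(n < B) #|pal_factors w n|.
Proof.
move=> lt_wB; rewrite /num_pal_factors (size_sum_count_size (B := B)).
  by apply: eq_bigr => n _; rewrite count_pal_factors.
apply/allP => v; rewrite mem_undup mem_filter mem_factors_of => /andP[_ /size_infix].
by move=> le_vw; apply: leq_ltn_trans le_vw lt_wB.
Qed.

(* The bound on [n] excludes the junk values [suffixn n s = s] for [n > size s]. *)
Definition new_pal_suffix w a n : bool :=
  [&& n <= (size w).+1, palindrome (suffixn n (rcons w a))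
    & ~~ infix (suffixn n (rcons w a)) w].

Lemma card_pal_factors_rcons w a n :
  #|pal_factors (rcons w a) n| = #|pal_factors w n| + new_pal_suffix w a n.
Proof.
case: (boolP (new_pal_suffix w a n)) => [/and3P[le_n pal_n new_n] | old_n].
  have size_n : size (suffixn n (rcons w a)) == n by rewrite size_suffixn ?size_rcons.
  suff -> : pal_factors (rcons w a) n = Tuple size_n |: pal_factors w n.
    by rewrite cardsU1 inE /= (negbTE new_n) addnC.
  apply/setP => t; rewrite !inE infix_rconsl suffix_suffixnE size_tuple -val_eqE /=.
  by have [-> | _] := eqVneq (val t); rewrite ?pal_n ?andbT ?orbT.
rewrite addn0; apply: eq_card => t; rewrite !inE infix_rconsl suffix_suffixnE size_tuple.
have [def_t | _] /= := eqVneq (val t); last by [].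
case t_pal: (palindrome t); rewrite ?andbF ?orbF // !andbT.
have le_n : n <= (size w).+1.
  by rewrite -[n](size_tuple t) def_t size_drop size_rcons leq_subr.
by move: old_n; rewrite /new_pal_suffix le_n -def_t t_pal /= negbK => ->.
Qed.

Lemma new_pal_suffix_uniq w a m n :
  new_pal_suffix w a m -> new_pal_suffix w a n -> m = n.
Proof.
wlog lt_mn : m n / m < n => [hwlog new_m new_n|].
  by have [/hwlog->|/hwlog->|] := ltngtP m n.
case/and3P=> le_m pal_m new_m /and3P[le_n pal_n _].
case/negP: new_m; rewrite (eqP pal_m).
apply: (pal_suffix_rcons_infix pal_n (suffixn_suffix _ _) (suffixn_leq _ (ltnW lt_mn))).
by rewrite !size_suffixn ?size_rcons.
Qed.

Lemma new_pal_suffixE w a n0 n :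
  new_pal_suffix w a n0 -> new_pal_suffix w a n = (n0 == n).
Proof.
move=> new_n0; case: eqP => [<- // | ne_n0_n].
by apply/negP => /(new_pal_suffix_uniq new_n0).
Qed.

Lemma sum_new_pal_suffix w a n0 B :
  new_pal_suffix w a n0 -> \sum_(n < B) new_pal_suffix w a n = (n0 < B).
Proof.
by move=> new_n0; under eq_bigr do rewrite (new_pal_suffixE _ new_n0); apply: sum_ord_eqn.
Qed.

Lemma num_pal_factors_rcons w a :
  num_pal_factors (rcons w a) =
  num_pal_factors w + [exists n : 'I_(size w).+2, new_pal_suffix w a n].
Proof.
rewrite (@num_pal_factors_sum w (size w).+2) //.
rewrite (@num_pal_factors_sum (rcons w a) (size w).+2) ?size_rcons //.
under eq_bigr do rewrite card_pal_factors_rcons.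
rewrite big_split /=; congr (_ + _).
have [[n0 new_n0] | none] := existsP; first by rewrite (sum_new_pal_suffix _ new_n0) ltn_ord.
by apply: big1 => n _; case new_n: (new_pal_suffix w a n) => //; case: none; exists n.
Qed.

End PalindromicFactors.

Section SymFactors.
Variable A : finType.
Implicit Types (w : seq A) (a : A).

Lemma sym_factors_rcons w a N (t0 : N.-tuple A) : val t0 = suffixn N (rcons w a) ->
  sym_factors (rcons w a) N = t0 |: (rev_tuple t0 |: sym_factors w N).
Proof.
move=> def_t0; apply/setP => t; rewrite !inE !infix_rconsl !suffix_suffixnE.
rewrite size_rev size_tuple -!val_eqE /= -def_t0 (can2_eq revK revK).
by case: (val t == val t0); case: (val t == rev t0); rewrite ?orbT ?orbF.
Qed.

Lemma card_sym_pal_factors_full w :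
  #|sym_factors w (size w)| + #|pal_factors w (size w)| = 2.
Proof.
have size_w : size w == size w by [].
pose tw := Tuple size_w.
have eq_tw (t : (size w).-tuple A) : (t == tw) = (val t == w) by [].
have -> : sym_factors w (size w) = [set tw; rev_tuple tw].
  apply/setP => t; rewrite !inE eq_tw -val_eqE /=.
  rewrite !infix_eq_size ?size_rev ?size_tuple //.
  by rewrite (can2_eq revK revK).
have -> : pal_factors w (size w) = if palindrome w then [set tw] else set0.
  apply/setP => t; rewrite !inE infix_eq_size ?size_tuple // -eq_tw.
  by have [-> | ] := eqVneq t tw; case: ifP; rewrite ?inE ?eqxx // => _ /negbTE ->.
rewrite cards2 -val_eqE /= /palindrome eq_sym.
by case: eqP => _; rewrite ?cards1 ?cards0.
Qed.

Lemma new_pal_suffix_leq w a m n : new_pal_suffix w a m -> m <= n ->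
  ~~ infix (suffixn n (rcons w a)) w && ~~ infix (rev (suffixn n (rcons w a))) w.
Proof.
case/and3P=> _ /eqP pal_m new_m le_mn.
have suf_mn := suffixn_leq (rcons w a) le_mn.
apply/andP; split; apply: contra new_m => /(infix_trans _); apply.
  exact: suffixW.
by rewrite pal_m prefixW // prefix_rev.
Qed.

Lemma new_pal_suffix_gtn w a m n : new_pal_suffix w a m -> n < m ->
  infix (rev (suffixn n (rcons w a))) w.
Proof.
case/and3P=> le_m pal_m _ lt_nm.
apply: (pal_suffix_rcons_infix pal_m (suffixn_suffix _ _) (suffixn_leq _ (ltnW lt_nm))).
by rewrite !size_suffixn ?size_rcons //; apply: leq_trans (ltnW lt_nm) le_m.
Qed.

Lemma card_sym_factors_rcons w a n0 N : new_pal_suffix w a n0 -> N <= size w ->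
  #|sym_factors (rcons w a) N| = #|sym_factors w N| + (n0 < N) + (n0 <= N).
Proof.
move=> new_n0 le_Nw.
have size_N : size (suffixn N (rcons w a)) == N by rewrite size_suffixn // size_rcons leqW.
rewrite (@sym_factors_rcons _ _ _ (Tuple size_N)) // !cardsU1 !inE -!val_eqE /= revK.
case: ltngtP => [lt_n0_N | lt_N_n0 | <-].
- have /andP[old_N old_revN] := new_pal_suffix_leq new_n0 (ltnW lt_n0_N).
  have not_pal_N : (suffixn N (rcons w a) == rev (suffixn N (rcons w a))) = false.
    apply: contraTF lt_n0_N => pal_N.
    have new_N : new_pal_suffix w a N by rewrite /new_pal_suffix /palindrome leqW // pal_N old_N.
    by rewrite (new_pal_suffix_uniq new_n0 new_N) ltnn.
  by rewrite (negbTE old_N) (negbTE old_revN) not_pal_N /=; lia.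
- by rewrite (new_pal_suffix_gtn new_n0 lt_N_n0) /=; lia.
- case/and3P: (new_n0) => _ /eqP pal_n0 new_n0'.
  by rewrite -pal_n0 eqxx (negbTE new_n0') /=; lia.
Qed.

End SymFactors.

Section InfiniteWord.
Variables (A : finType) (u : nat -> A).
Implicit Types (w : seq A).

Lemma size_word_prefix k : size (Defs.prefix u k) = k.
Proof. by rewrite size_map size_iota. Qed.

Lemma word_prefixS k : Defs.prefix u k.+1 = rcons (Defs.prefix u k) (u k).
Proof. by rewrite /Defs.prefix -addn1 iotaD map_cat cats1. Qed.

Lemma map_iota_shift i n : [seq u (i + k) | k <- iota 0 n] = map u (iota i n).
Proof. by rewrite -{2}(addn0 i) iotaDl -map_comp. Qed.

Lemma infix_word_prefix_leq w m n :
  m <= n -> infix w (Defs.prefix u m) -> infix w (Defs.prefix u n).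
Proof.
by move=> le_mn /infix_trans; apply; rewrite -(subnKC le_mn) /Defs.prefix iotaD map_cat prefix_infix.
Qed.

Lemma is_factorP w : is_factor u w <-> exists m, infix w (Defs.prefix u m).
Proof.
split=> [[i ->] | [m /infixP[x [y def_um]]]].
  exists (i + size w); rewrite /Defs.prefix iotaD map_cat map_iota_shift.
  exact: suffix_infix.
have le_xwm : size x + size w <= m.
  by move/(congr1 size): def_um; rewrite size_word_prefix !size_cat => ->; rewrite addnA leq_addr.
exists (size x); rewrite map_iota_shift.
have : take (size w) (drop (size x) (Defs.prefix u m)) = w.
  by rewrite def_um drop_size_cat // take_size_cat.
rewrite /Defs.prefix -map_drop -map_take drop_iota take_iota add0n => <-.
by rewrite size_map size_iota minnE; congr (map u (iota _ _)); lia.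
Qed.

Definition prefix_has_factors M N := forall n, n <= N ->
  forall t : n.-tuple A, is_factor u t -> infix t (Defs.prefix u M).

(* Finitely many words of length [N] are factors; those of length [n <= N] are
   prefixes of them. *)
Lemma exists_prefix_has_factors N : exists M, prefix_has_factors M N.
Proof.
have [occ occP] : {occ : N.-tuple A -> nat &
    forall t : N.-tuple A, is_factor u t -> infix t (Defs.prefix u (occ t))}.
  apply: (@choice _ _ (fun (t : N.-tuple A) m => is_factor u t -> infix t (Defs.prefix u m))).
  move=> t; have [/is_factorP[m t_m] | not_t] := pselect (is_factor u t).
    by exists m.
  by exists 0 => /not_t.
exists (\max_t occ t) => n le_nN t [i def_t].
have size_N : size [seq u (i + k) | k <- iota 0 N] == N by rewrite size_map size_iota.
have factor_N : is_factor u (Tuple size_N) by exists i; rewrite /= size_map size_iota.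
apply: infix_trans _ (infix_word_prefix_leq (leq_bigmax _) (occP _ factor_N)).
by rewrite def_t /= size_tuple -(subnKC le_nN) iotaD map_cat prefix_infix.
Qed.

Lemma card_pal_factors_prefix M N n : prefix_has_factors M N -> n <= N ->
  #|pal_factors (Defs.prefix u M) n| = pal_complexity u n.
Proof.
move=> has_M le_nN; apply: eq_card => t; rewrite !inE; congr (_ && _).
by apply/idP/asboolP => [t_M | /(has_M _ le_nN)//]; apply/is_factorP; exists M.
Qed.

Lemma card_sym_factors_prefix M N : closed_under_reversal u ->
  prefix_has_factors M N -> #|sym_factors (Defs.prefix u M) N| = factor_complexity u N.
Proof.
move=> rev_u has_M; apply: eq_card => t; rewrite !inE.
apply/idP/asboolP => [/orP[] t_M | /(has_M _ (leqnn N))->//].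
  by apply/is_factorP; exists M.
by rewrite -[val t]revK; apply/rev_u/is_factorP; exists M.
Qed.

End InfiniteWord.

Local Open Scope ring_scope.

Definition T_telescoped (c p : nat -> nat) (N : nat) : int :=
  (c N)%:Z + (p N)%:Z + 2 * N%:Z - 2 * (\sum_(n < N.+1) p n)%N%:Z.

Section FiniteWordT.
Variable A : finType.
Implicit Types (w : seq A) (a : A).

Definition T_word w N :=
  T_telescoped (fun n => #|sym_factors w n|) (fun n => #|pal_factors w n|) N.

Lemma defect_rcons w a : defect (rcons w a) =
  defect w + 1 - [exists n : 'I_(size w).+2, new_pal_suffix w a n]%:Z.
Proof. by rewrite /defect num_pal_factors_rcons size_rcons; lia. Qed.

Lemma defect_rcons_ge w a : defect w <= defect (rcons w a).
Proof. by rewrite defect_rcons; case: existsP => _; lia. Qed.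

Lemma T_word_full w : T_word w (size w) = 2 * defect w.
Proof.
rewrite /T_word /T_telescoped /defect (@num_pal_factors_sum _ w (size w).+1) //.
by rewrite -PoszD card_sym_pal_factors_full; ring.
Qed.

Lemma T_word_rcons w a N : (N <= size w)%N -> defect (rcons w a) = defect w ->
  T_word (rcons w a) N = T_word w N.
Proof.
move=> le_Nw; rewrite defect_rcons; case: existsP => [[n0 new_n0] _ | _]; last by lia.
rewrite /T_word /T_telescoped (card_sym_factors_rcons new_n0 le_Nw).
under eq_bigr do rewrite card_pal_factors_rcons.
rewrite big_split /= (sum_new_pal_suffix _ new_n0) card_pal_factors_rcons.
rewrite (new_pal_suffixE _ new_n0) ltnS.
by case: ltngtP => _; rewrite /= ?addn0 ?PoszD; ring.
Qed.

End FiniteWordT.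

Section InfiniteWordT.
Variables (A : finType) (u : nat -> A).

Lemma complexity0 : factor_complexity u 0 = pal_complexity u 0.
Proof. by apply: eq_card => t; rewrite !inE tuple0 /palindrome /= andbT. Qed.

Lemma sum_T_u N :
  \sum_(n < N) T_u u n = T_telescoped (factor_complexity u) (pal_complexity u) N.
Proof.
rewrite /T_telescoped; elim: N => [|N IHN].
  by rewrite big_ord0 big_ord1 complexity0; ring.
by rewrite big_ord_recr IHN (big_ord_recr N.+1) /= /T_u PoszD; ring.
Qed.

Lemma T_word_prefix M N : closed_under_reversal u -> prefix_has_factors u M N ->
  T_word (Defs.prefix u M) N = \sum_(n < N) T_u u n.
Proof.
move=> rev_u has_M; rewrite sum_T_u /T_word /T_telescoped.
rewrite (card_sym_factors_prefix rev_u has_M) (card_pal_factors_prefix has_M) //.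
by rewrite (eq_bigr _ (fun (n : 'I_N.+1) _ => card_pal_factors_prefix has_M (ltn_ord n))).
Qed.

Lemma defect_word_prefix_leq :
  {homo (fun k => defect (Defs.prefix u k)) : m n / (m <= n)%N >-> m <= n}.
Proof.
apply: homo_leq => [x | y x z | k]; [exact: lexx | exact: le_trans |].
by rewrite /= word_prefixS defect_rcons_ge.
Qed.

Lemma defect_is_eventually d : defect_is u d ->
  exists k0, forall k, (k0 <= k)%N -> defect (Defs.prefix u k) = d.
Proof.
case=> le_d least_d; have [k0 def_d] : exists k0, defect (Defs.prefix u k0) = d.
  apply: contrapT => /forallNP lt_d.
  have: d <= d - 1 by apply: least_d => k; have := le_d k; have := lt_d k; lia.
  lia.
exists k0 => k le_k0k; apply/eqP; rewrite eq_le le_d -def_d.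
exact: defect_word_prefix_leq.
Qed.

Lemma T_word_prefix_stable d k0 N M :
  (forall k, (k0 <= k)%N -> defect (Defs.prefix u k) = d) -> (k0 <= N <= M)%N ->
  T_word (Defs.prefix u M) N = 2 * d.
Proof.
move=> def_d /andP[le_k0N le_NM]; rewrite -(subnKC le_NM).
elim: (M - N)%N => [|j IHj].
  by rewrite addn0 -{2}(size_word_prefix u N) T_word_full def_d.
rewrite addnS word_prefixS T_word_rcons ?IHj ?size_word_prefix ?leq_addr //.
have le_k0 : (k0 <= N + j)%N := leq_trans le_k0N (leq_addr j N).
by rewrite -word_prefixS !def_d ?le_k0 ?leqW.
Qed.

End InfiniteWordT.

Theorem theorem1 (A : finType) (u : nat -> A)
  (hrev : closed_under_reversal u)
  (d : int) (hD : defect_is u d)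
  (S : int) (hS : T_sum_is u S) :
  2 * d = S.
Proof.
have [k0 def_d] := defect_is_eventually hD.
have [N0 def_S] := hS.
pose N := maxn N0 k0.
have [M has_M] := exists_prefix_has_factors u N.
pose M' := maxn M N.
have has_M' : prefix_has_factors u M' N.
  by move=> n le_nN t /(has_M _ le_nN); apply: infix_word_prefix_leq; apply: leq_maxl.
rewrite -(def_S N) ?leq_maxl // -(T_word_prefix hrev has_M').
by rewrite (T_word_prefix_stable def_d) // leq_maxr leq_maxr.
Qed.
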